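(* Let $\sigma$ satisfy Condition $O_N$. Then: (i) for $\delta_0\le\lambda<1$ and $0<r\le r_0$, the sets $L_i^r(\lambda)$ ($1\le i\le N$), $L^r(\lambda)$, $\Sigma^r(\lambda)$ and $\Sigma(1)$ are open; (ii) if $1\le k\le N$ and $0<r<s\le r_0$, then $\overline{S_k^r(\lambda)}\subset S_k^s(\lambda)$ for all $0\le\lambda\le1$, and $\overline{\Sigma^r(\lambda)}\subset\Sigma^s(\lambda)$ for all $\delta_0\le\lambda<1$; (iii) if $\Delta\subset\Sigma(1)$ is compact, then $\Delta\subset\Sigma^r(\lambda)$ for some $r\in(0,r_0)$ and $\lambda\in[\delta_0,1)$.
   Context: Wave cone: $\Gamma=\{(p\otimes a,B):p\in\mathbb R^m,\ a\in\mathbb R^n\setminus\{0\},\ B\in\mathbb R^{m\times n},\ Ba=0\}$, $p\otimes a=pa^T$. Write $\rho=(\rho^1,\rho^2)\in\mathbb R^{m\times n}\times\mathbb R^{m\times n}$; $\mathbb B_r,\bar{\mathbb B}_r$ are open/closed balls of radius $r$ about $0$. Condition $O_N$ ($N\ge2$): $\sigma\colon\mathbb R^{m\times n}\to\mathbb R^{m\times n}$ continuous with graph $\mathcal K$; there exist $r_0>0$, $0<\delta_1<\delta_2<1$ and continuous $(\kappa_i,\gamma_i)\colon\bar{\mathbb B}_{r_0}\to[1/\delta_2,1/\delta_1]\times\Gamma$ with $\sum_{i=1}^N\gamma_i\equiv0$ such that, with $\pi_1(\rho)=\rho$, $\pi_i(\rho)=\rho+\gamma_1(\rho)+\dots+\gamma_{i-1}(\rho)$,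 $\xi_i(\rho)=\pi_i(\rho)+\kappa_i(\rho)\gamma_i(\rho)$: (P1)(i) $\xi_i(\rho)\in\mathcal K$ on $\bar{\mathbb B}_{r_0}$; (ii) $\xi_i^1(\bar{\mathbb B}_{r_0})\cap\xi_j^1(\bar{\mathbb B}_{r_0})=\pi_i^1(\bar{\mathbb B}_{r_0})\cap\pi_j^1(\bar{\mathbb B}_{r_0})=\emptyset$ for $i\neq j$; (P2) with $S_i^r(\lambda)=\{\lambda\xi_i(\rho)+(1-\lambda)\pi_i(\rho):\rho\in\mathbb B_r\}$ ($0<r\le r_0$, $0\le\lambda\le1$), there exists $\delta_0\in(\delta_2,1)$ such that for all $0<r\le r_0$ and $\lambda\in\{0\}\cup[\delta_0,1)$ the sets $S_1^r(\lambda),\dots,S_N^r(\lambda)$ are open and pairwise disjoint. Derived sets: $L_i^r(\lambda)=\bigcup\{[\alpha,\beta]:\alpha\in S_i^r(\lambda),\beta\in S_i^r(0),\alpha-\beta\in\Gamma\}$; $L^r(\lambda)=\bigcup_iL_i^r(\lambda)$; $\Sigma^r(\lambda)=\bigcup_{\delta_0\le\lambda'\le\lambda}L^r(\lambda')$ for $\delta_0\le\lambda<1$; $\Sigma(1)=\bigcup_{\delta_0\le\lambda<1}\Sigma^{r_0}(\lambda)$. *)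

From HB Require Import structures.
From mathcomp Require Import all_boot all_order all_algebra.
From mathcomp Require Import all_classical all_reals all_analysis.
Set Implicit Arguments. Unset Strict Implicit. Unset Printing Implicit Defensive.
Import Order.TTheory GRing.Theory Num.Theory.
Import numFieldTopology.Exports numFieldNormedType.Exports.
Local Open Scope ring_scope.
Local Open Scope classical_set_scope.

Section Defs.
Variables (R : realType) (m n N : nat).

Local Notation P := ('M[R]_(m, n) * 'M[R]_(m, n))%type.

(* wave cone Gamma = {(p (x) a, B) : a <> 0, B a = 0},  p (x) a = p a^T *)
Definition wave_cone : set P :=
  [set x | exists (p : 'cV[R]_m) (a : 'cV[R]_n) (B : 'M[R]_(m, n)),
      a != 0 /\ B *m a = 0 /\ x = (p *m a^T, B)].

Definition sqnorm (x : P) : R :=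
  \sum_(i < m) \sum_(j < n) (x.1 i j) ^+ 2 + \sum_(i < m) \sum_(j < n) (x.2 i j) ^+ 2.

Definition oball (r : R) : set P := [set x | sqnorm x < r ^+ 2].
Definition cball (r : R) : set P := [set x | sqnorm x <= r ^+ 2].

Definition graph (sigma : 'M[R]_(m, n) -> 'M[R]_(m, n)) : set P :=
  [set x | x.2 = sigma x.1].

Variables (kappa : 'I_N -> P -> R) (gamma : 'I_N -> P -> P).

(* indices are 0-based: i : 'I_N stands for i+1 in the paper *)
Definition pi_ (i : 'I_N) (rho : P) : P :=
  rho + \sum_(j < N | (j < i)%N) gamma j rho.
Definition xi_ (i : 'I_N) (rho : P) : P :=
  pi_ i rho + kappa i rho *: gamma i rho.

Definition Sset (r lam : R) (i : 'I_N) : set P :=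
  [set lam *: xi_ i rho + (1 - lam) *: pi_ i rho | rho in oball r].

Definition segment (a b : P) : set P :=
  [set t *: a + (1 - t) *: b | t in `[0, 1]%classic].

Definition Lset_i (r lam : R) (i : 'I_N) : set P :=
  [set x | exists a b, Sset r lam i a /\ Sset r 0 i b /\ wave_cone (a - b)
                       /\ segment a b x].
Definition Lset (r lam : R) : set P := [set x | exists i, Lset_i r lam i x].

Variable delta0 : R.
Definition Sigma (r lam : R) : set P :=
  [set x | exists lam', delta0 <= lam' <= lam /\ Lset r lam' x].
Definition Sigma1 (r0 : R) : set P :=
  [set x | exists lam, delta0 <= lam < 1 /\ Sigma r0 lam x].

(* Condition O_N, with the constant delta0 of (P2) as an explicit parameter *)
Definition condition_O (sigma : 'M[R]_(m, n) -> 'M[R]_(m, n))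
    (r0 delta1 delta2 : R) : Prop :=
  (2 <= N)%N /\
      continuous sigma /\
      0 < r0 /\ 0 < delta1 /\ delta1 < delta2 /\ delta2 < 1 /\
      (forall i, {within cball r0, continuous (kappa i)} /\
                 {within cball r0, continuous (gamma i)}) /\
      (forall i rho, cball r0 rho ->
         1 / delta2 <= kappa i rho <= 1 / delta1 /\ wave_cone (gamma i rho)) /\
      (forall rho, cball r0 rho -> \sum_(i < N) gamma i rho = 0) /\
      (forall i rho, cball r0 rho -> graph sigma (xi_ i rho)) /\
      (forall i j, i != j ->
         ((fun rho => (xi_ i rho).1) @` cball r0)
           `&` ((fun rho => (xi_ j rho).1) @` cball r0) = set0 /\
         ((fun rho => (pi_ i rho).1) @` cball r0)
           `&` ((fun rho => (pi_ j rho).1) @` cball r0) = set0) /\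
      (delta2 < delta0 /\ delta0 < 1 /\
       forall r lam, 0 < r -> r <= r0 -> (lam = 0 \/ (delta0 <= lam /\ lam < 1)) ->
         (forall i, open (Sset r lam i)) /\
         (forall i j, i != j -> Sset r lam i `&` Sset r lam j = set0)).

End Defs.

(* (i) A point x on a segment [a, b] with a in S_i^r(lam), b in S_i^r(0) and
   a - b in the wave cone stays on such a segment after translating both ends by
   z - x, and the translated ends remain in the open sets S_i^r(lam), S_i^r(0) for
   z near x; the other sets are unions of these.
   (ii) With the wave-cone direction normalised to a unit vector, S_k^r(lam) and
   Sigma^r(lam) lie inside continuous images of compact sets built from the closed
   ball of radius r, and these closed images lie inside the sets of radius s > r.
   (iii) Sigma(1) is covered by the open sets Sigma^r(lam), r < r0, which increase
   with r and lam, so a compact subset is contained in one of them. *)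

From Pilot Require Import Defs.
From HB Require Import structures.
From mathcomp Require Import all_boot all_order all_algebra.
From mathcomp Require Import all_classical all_reals all_analysis.
From mathcomp Require Import lra finmap.
Import Order.TTheory GRing.Theory Num.Theory.
Import numFieldTopology.Exports numFieldNormedType.Exports.
Local Open Scope ring_scope.
Local Open Scope classical_set_scope.

Section matrix_topology.
Variable R : realType.

Lemma cvg_mx_entries {T : Type} (F : set_system T) {FF : Filter F} p q
    (f : T -> 'M[R]_(p, q)) (L : 'M[R]_(p, q)) :
  (forall i j, (fun x => f x i j) @ F --> L i j) -> f @ F --> L.
Proof.
move=> fL; apply/cvg_ballP => e e0.
have : \forall x \near F, forall i j, ball (L i j) e (f x i j).
  by do 2![apply: filter_forall => ?]; exact: (cvg_ball (fL _ _)).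
by apply: filterS => x Hx; split.
Qed.

Lemma cvg_mx_entry {T : Type} (F : set_system T) {FF : Filter F} p q
    (f : T -> 'M[R]_(p, q)) (A : 'M[R]_(p, q)) i j :
  f @ F --> A -> (fun x => f x i j) @ F --> A i j.
Proof. by move=> fA; exact: (cvg_comp _ _ fA (@coord_continuous _ _ _ i j A)). Qed.

Lemma cvg_mulmx {T : Type} (F : set_system T) {FF : Filter F} p q k
    (f : T -> 'M[R]_(p, q)) (g : T -> 'M[R]_(q, k)) (A : 'M[R]_(p, q)) (B : 'M[R]_(q, k)) :
  f @ F --> A -> g @ F --> B -> (fun x => f x *m g x) @ F --> A *m B.
Proof.
move=> fA gB; apply: cvg_mx_entries => i j.
under eq_fun do rewrite mxE. rewrite mxE.
apply: cvg_big => [|l _]; first exact: add_continuous.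
by apply: cvgM; exact: cvg_mx_entry.
Qed.

Lemma cvg_trmx {T : Type} (F : set_system T) {FF : Filter F} p q
    (f : T -> 'M[R]_(p, q)) (A : 'M[R]_(p, q)) :
  f @ F --> A -> (fun x => (f x)^T) @ F --> A^T.
Proof.
move=> fA; apply: cvg_mx_entries => i j.
by under eq_fun do rewrite mxE; rewrite mxE; exact: cvg_mx_entry.
Qed.

Definition sqm {p q} (M : 'M[R]_(p, q)) := \sum_(i < p) \sum_(j < q) M i j ^+ 2.

Lemma cvg_sqm {T : Type} (F : set_system T) {FF : Filter F} p q
    (f : T -> 'M[R]_(p, q)) (A : 'M[R]_(p, q)) :
  f @ F --> A -> (fun x => sqm (f x)) @ F --> sqm A.
Proof.
move=> fA; apply: cvg_big => [|i _]; first exact: add_continuous.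
apply: cvg_big => [|j _]; first exact: add_continuous.
by rewrite expr2; under eq_fun do rewrite expr2; apply: cvgM; exact: cvg_mx_entry.
Qed.

Lemma sqm_continuous p q : continuous (@sqm p q).
Proof. by move=> M; exact: (@cvg_sqm _ _ (nbhs_filter M) _ _ id M cvg_id). Qed.

Lemma sqm_ge0 {p q} (M : 'M[R]_(p, q)) : 0 <= sqm M.
Proof. by apply: sumr_ge0 => i _; apply: sumr_ge0 => j _; exact: sqr_ge0. Qed.

Lemma sqm_entry {p q} (M : 'M[R]_(p, q)) i j : M i j ^+ 2 <= sqm M.
Proof.
rewrite /sqm (bigD1 i) //= (bigD1 j) //= -addrA lerDl.
apply: addr_ge0; first by apply: sumr_ge0 => k _; exact: sqr_ge0.
by apply: sumr_ge0 => k _; apply: sumr_ge0 => l _; exact: sqr_ge0.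
Qed.

Lemma vec_mx_continuous p q : continuous (@vec_mx R p q).
Proof.
move=> w; apply: (@cvg_mx_entries _ _ (nbhs_filter w)) => i j.
have vec_mxE (v : 'rV[R]_(p * q)) : vec_mx v i j = v 0 (mxvec_index i j).
  by rewrite -{2}(vec_mxK v) mxvecE.
under eq_fun do rewrite vec_mxE.
by rewrite vec_mxE; apply: cvg_mx_entry; exact: cvg_id.
Qed.

Lemma compact_mx_box p q (c : R) :
  compact [set M : 'M[R]_(p, q) | forall i j, - c <= M i j <= c].
Proof.
have -> : [set M : 'M[R]_(p, q) | forall i j, - c <= M i j <= c] =
    vec_mx @` [set v : 'rV[R]_(p * q) | forall k, `[- c, c] (v ord0 k)].
  apply/seteqP; split => [M HM | _ [v Hv <-] i j].
    exists (mxvec M); last exact: mxvecK.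
    by move=> k; case/mxvec_indexP: k => i j; rewrite /= mxvecE in_itv /= HM.
  by have := Hv (mxvec_index i j); rewrite -{1}(vec_mxK v) mxvecE /= in_itv.
apply: continuous_compact; first exact/continuous_subspaceT/vec_mx_continuous.
by apply: (@rV_compact _ _ (fun=> `[- c, c]%classic)) => k; exact: segment_compact.
Qed.

Lemma compact_sqm_le p q (c : R) : 0 <= c ->
  compact [set M : 'M[R]_(p, q) | sqm M <= c ^+ 2].
Proof.
move=> c0; apply: (subclosed_compact _ (compact_mx_box p q c)).
  rewrite -[X in closed X]/(sqm @^-1` [set y | y <= c ^+ 2]).
  by apply: (proj1 (continuous_closedP _)); [exact: sqm_continuous | exact: closed_le].
move=> M /= HM i j; have := le_trans (sqm_entry M i j) HM.
by move=> h; apply/andP; split; nra.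
Qed.

Lemma compact_sqm_eq1 p q : compact [set M : 'M[R]_(p, q) | sqm M = 1].
Proof.
apply: (subclosed_compact _ (@compact_sqm_le p q 1 ler01)).
  rewrite -[X in closed X]/(sqm @^-1` [set y | y = 1]).
  by apply: (proj1 (continuous_closedP _)); [exact: sqm_continuous | exact: closed_eq].
by move=> M /= ->; rewrite expr1n.
Qed.

End matrix_topology.
Arguments sqm {R p q}.
Arguments sqm_ge0 {R p q}.
Arguments sqm_entry {R p q}.

Section wave_cone_direction.
Variable R : realType.

Lemma trmx_mul_sqm n (a : 'cV[R]_n) : a^T *m a = (sqm a)%:M.
Proof.
rewrite [LHS]mx11_scalar; congr (_%:M).
by rewrite mxE /sqm; apply: eq_bigr => i _; rewrite big_ord1 mxE expr2.
Qed.

Lemma sqmZ p q (k : R) (M : 'M[R]_(p, q)) : sqm (k *: M) = k ^+ 2 * sqm M.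
Proof.
rewrite /sqm mulr_sumr; apply: eq_bigr => i _; rewrite mulr_sumr.
by apply: eq_bigr => j _; rewrite mxE exprMn.
Qed.

Lemma sqm_eq0 p q (M : 'M[R]_(p, q)) : (sqm M == 0) = (M == 0).
Proof.
apply/eqP/eqP => [M0 | ->].
  apply/matrixP => i j; rewrite mxE; apply/eqP; rewrite -sqrf_eq0 eq_le sqr_ge0 andbT.
  by rewrite -M0 sqm_entry.
by rewrite /sqm big1 // => i _; rewrite big1 // => j _; rewrite mxE expr0n.
Qed.

(* A nonzero direction a of the wave cone can be normalised so that a^T a = 1;
   then p is recovered as x.1 *m a. *)
Lemma wave_coneP m n (x : 'M[R]_(m, n) * 'M[R]_(m, n)) :
  wave_cone x <->
  exists a : 'cV[R]_n, [/\ sqm a = 1, x.2 *m a = 0 & x.1 *m a *m a^T = x.1].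
Proof.
split=> [[p [a [B [a0 [Ba ->]]]]] | [a [a1 Ba Ma]]] /=; last first.
  exists (x.1 *m a), a, x.2; split; first by rewrite -sqm_eq0 a1 oner_neq0.
  by case: x Ma Ba => x1 x2 /= ->.
have s0 : 0 < sqm a by rewrite lt_def sqm_ge0 sqm_eq0 a0.
set c := Num.sqrt (sqm a).
have c0 : c != 0 by rewrite sqrtr_eq0 -ltNge.
have cs : c ^+ 2 = sqm a by rewrite sqr_sqrtr // ltW.
have tZ : (c^-1 *: a)^T = c^-1 *: a^T by apply/matrixP => i j; rewrite !mxE.
exists (c^-1 *: a); split.
- by rewrite sqmZ exprVn cs mulVf // -cs sqrf_eq0.
- by rewrite -scalemxAr Ba scaler0.
rewrite tZ -!scalemxAr -scalemxAl scalerA -(mulmxA p) trmx_mul_sqm mul_mx_scalar.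
by rewrite -scalemxAl scalerA -expr2 exprVn cs mulVf ?scale1r // -cs sqrf_eq0.
Qed.

End wave_cone_direction.

Lemma open_exists {T : topologicalType} {I : Type} (D : I -> Prop) (F : I -> set T) :
  (forall i, D i -> open (F i)) -> open [set x | exists i, D i /\ F i x].
Proof.
move=> oF; have -> : [set x | exists i, D i /\ F i x] = \bigcup_(i in D) F i.
  by apply/seteqP; split => x [i]; [case | ]; exists i.
exact: bigcup_open.
Qed.

Lemma closed_closure_sub {T : topologicalType} (A B C : set T) :
  closed C -> A `<=` C -> C `<=` B -> closure A `<=` B.
Proof. by move=> cC AC; apply: subset_trans; rewrite closureE; exact: smallest_sub. Qed.

Lemma compact_directed_cover {T : ptopologicalType} {I : choiceType} (D : set I)
    (U : I -> set T) (K : set T) :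
  compact K -> (forall i, D i -> open (U i)) -> K `<=` \bigcup_(i in D) U i ->
  D !=set0 -> (forall i j, D i -> D j -> exists2 k, D k & U i `|` U j `<=` U k) ->
  exists2 k, D k & K `<=` U k.
Proof.
move=> + oU KU [i0 Di0] dirU; rewrite (@compact_cover T) => cK.
have [D' D'D KD'] := cK I D U oU KU.
suff [k Dk Uk] : exists2 k, D k & forall i, i \in (D' : seq I) -> U i `<=` U k.
  by exists k => // x /KD' [i /= iD' Ui]; exact: Uk Ui.
have : {subset (D' : seq I) <= D} by [].
elim: (D' : seq I) => [_ | i s IH sD]; first by exists i0.
have [k Dk Uk] : exists2 k, D k & forall j, j \in s -> U j `<=` U k.
  by apply: IH => j js; apply: sD; rewrite inE js orbT.
have Di : D i by rewrite -in_setE; apply: sD; exact: mem_head.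
have [k' Dk' Ukk'] := dirU i k Di Dk.
exists k' => // j; rewrite inE => /predU1P [-> | js] x Ux; apply: Ukk'; first by left.
by right; exact: Uk Ux.
Qed.

Section product_limits.
Context {T : Type} {F : set_system T} {U V : topologicalType}.

Lemma cvg_fst_comp {f : T -> U * V} {a : U * V} :
  f @ F --> a -> (fun x => (f x).1) @ F --> a.1.
Proof. by move=> fa; exact: (cvg_comp _ _ fa (@cvg_fst _ _ (nbhs a.1) (nbhs a.2) _)). Qed.

Lemma cvg_snd_comp {f : T -> U * V} {a : U * V} :
  f @ F --> a -> (fun x => (f x).2) @ F --> a.2.
Proof. by move=> fa; exact: (cvg_comp _ _ fa (@cvg_snd _ _ (nbhs a.1) (nbhs a.2) _)). Qed.

End product_limits.

Definition lerp {R : numDomainType} {V : lmodType R} (t : R) (a b : V) : V :=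
  t *: a + (1 - t) *: b.

Lemma lerpDr {R : numDomainType} {V : lmodType R} (c : V) t a b :
  lerp t (a + c) (b + c) = lerp t a b + c.
Proof. by rewrite /lerp !scalerDr addrACA -scalerDl subrKC scale1r. Qed.

Lemma lerp_continuous {R : numFieldType} {V : normedModType R} :
  continuous (fun p : R * (V * V) => lerp p.1 p.2.1 p.2.2).
Proof.
move=> p; have ct : {for p, continuous fst} by exact: cvg_fst.
have ca : {for p, continuous (fun q : R * (V * V) => q.2.1)}.
  by apply: continuous_comp; [exact: cvg_snd | exact: cvg_fst].
have cb : {for p, continuous (fun q : R * (V * V) => q.2.2)}.
  by apply: continuous_comp; [exact: cvg_snd | exact: cvg_snd].
by apply: cvgD; apply: cvgZ => //; apply: cvgB => //; exact: cvg_cst.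
Qed.

Section wave_hull.
Variables (R : realType) (m n : nat).
Local Notation P := ('M[R]_(m, n) * 'M[R]_(m, n))%type.

Definition wave_hull (A B : set P) : set P :=
  [set x | exists a b, A a /\ B b /\ wave_cone (a - b) /\ segment a b x].

Lemma wave_hullS (A A' B B' : set P) :
  A `<=` A' -> B `<=` B' -> wave_hull A B `<=` wave_hull A' B'.
Proof. by move=> AA' BB' x [a [b [/AA' Aa [/BB' Bb W]]]]; exists a, b. Qed.

Lemma open_wave_hull (A B : set P) : open A -> open B -> open (wave_hull A B).
Proof.
rewrite !openE => oA oB x [a [b [Aa [Bb [W [t t01 Ex]]]]]].
have nA : \forall z \near x, A (a + (z - x)).
  have h : \forall y \near a, A y := oA a Aa.
  by rewrite (near_shift x) in h; apply: filterS h => z; rewrite /= addrCA.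
have nB : \forall z \near x, B (b + (z - x)).
  have h : \forall y \near b, B y := oB b Bb.
  by rewrite (near_shift x) in h; apply: filterS h => z; rewrite /= addrCA.
apply: filterS2 nA nB => z Az Bz.
exists (a + (z - x)), (b + (z - x)); do 3?split => //.
  by rewrite opprD addrACA subrr addr0.
by exists t => //; move: (lerpDr (z - x) t a b); rewrite /lerp Ex subrKC.
Qed.

Lemma closed_wave_hull (A B : set P) : compact A -> compact B -> closed (wave_hull A B).
Proof.
move=> cA cB.
pose X := (R * (P * P) * 'cV[R]_n)%type.
pose K : set X := `[0, 1]%classic `*` (A `*` B) `*` [set e | sqm e = 1].
pose F (y : X) := lerp y.1.1 y.1.2.1 y.1.2.2.
pose d (y : X) := y.1.2.1 - y.1.2.2.
(* [g y = 0] is the condition of [wave_coneP] for [a - b] and the unit direction [e]. *)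
pose g y : 'cV[R]_m * 'M[R]_(m, n) := ((d y).2 *m y.2, (d y).1 *m y.2 *m y.2^T - (d y).1).
have -> : wave_hull A B = F @` (K `&` g @^-1` [set 0]).
  apply/seteqP; split.
    move=> x [a [b [Aa [Bb [/wave_coneP [e [e1 d2 d1]] [t t01 <-]]]]]].
    by exists (t, (a, b), e) => //; split; [|rewrite /g /d /= d2 d1 subrr].
  move=> _ [[[t [a b]] e] [[[t01 [Aa Bb]] e1] /= [g1 g2]] <-].
  exists a, b; do 3?split => //; last by exists t.
  by apply/wave_coneP; exists e; split => //; apply/eqP; rewrite -subr_eq0 g2.
have cK : compact K.
  apply: compact_setX; last exact: compact_sqm_eq1.
  by apply: compact_setX; [exact: segment_compact | exact: compact_setX].
have cF : continuous F.
  move=> y; have c1 : {for y, continuous fst} by exact: cvg_fst.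
  exact: (continuous_comp c1 (lerp_continuous y.1)).
have cg : continuous g.
  move=> y; have cy : (fun z : X => z) @ y --> y by exact: cvg_id.
  have cd : d @ y --> d y.
    have cab := cvg_snd_comp (cvg_fst_comp cy).
    exact: cvgB (cvg_fst_comp cab) (cvg_snd_comp cab).
  have cd1 := cvg_fst_comp cd; have cd2 := cvg_snd_comp cd.
  have ce := cvg_snd_comp cy.
  apply: (@cvg_pair _ _ _ _ (nbhs _) (nbhs _) _ (nbhs_filter _) (nbhs_filter _)).
    exact: cvg_mulmx.
  by apply: cvgB => //; apply: cvg_mulmx; [exact: cvg_mulmx | exact: cvg_trmx].
apply: compact_closed; first exact: norm_hausdorff.
apply: continuous_compact; first exact: continuous_subspaceT.
apply: compact_closedI cK _; apply: (proj1 (continuous_closedP _) cg).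
exact/accessible_closed_set1/hausdorff_accessible/norm_hausdorff.
Qed.
End wave_hull.
Arguments wave_hull {R m n}.

Section condition_O_sets.
Variables (R : realType) (m n N : nat).
Local Notation P := ('M[R]_(m, n) * 'M[R]_(m, n))%type.
Local Notation oball r := (@oball R m n r).
Local Notation cball r := (@cball R m n r).

Lemma le_oball r s : 0 <= r -> r <= s -> oball r `<=` oball s.
Proof. by move=> r0 rs x /= xr; apply: (lt_le_trans xr); nra. Qed.

Lemma le_cball r s : 0 <= r -> r <= s -> cball r `<=` cball s.
Proof. by move=> r0 rs x /= xr; apply: (le_trans xr); nra. Qed.

Lemma oball_cball r : oball r `<=` cball r.
Proof. by move=> x /ltW. Qed.

Lemma lt_cball_oball r s : 0 <= r -> r < s -> cball r `<=` oball s.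
Proof. by move=> r0 rs x /= xr; apply: (le_lt_trans xr); nra. Qed.

Lemma compact_cball r : 0 <= r -> compact (cball r).
Proof.
move=> r0; have cB := @compact_sqm_le R m n r r0.
apply: (subclosed_compact _ (compact_setX cB cB)).
  rewrite -[X in closed X]/((fun x : P => sqm x.1 + sqm x.2) @^-1` [set y | y <= r ^+ 2]).
  apply: (proj1 (continuous_closedP _)); last exact: closed_le.
  by move=> x; apply: cvgD; apply: cvg_sqm; [exact: cvg_fst | exact: cvg_snd].
move=> x /= Hx; split => /=; apply: le_trans Hx; [rewrite lerDl | rewrite lerDr]; exact: sqm_ge0.
Qed.

Lemma sqnorm_ge0 (x : P) : 0 <= sqnorm x.
Proof. by apply: addr_ge0; exact: sqm_ge0. Qed.

Lemma oball_shrink {s rho} : 0 < s -> oball s rho -> exists r, [/\ 0 < r, r < s & oball r rho].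
Proof.
rewrite /Defs.oball /= => s0 rs; set c := Num.sqrt (sqnorm rho).
have c0 : 0 <= c by exact: sqrtr_ge0.
have cc : c ^+ 2 = sqnorm rho by rewrite sqr_sqrtr // sqnorm_ge0.
have cs : c < s by nra.
by exists ((c + s) / 2); split => //; nra.
Qed.

Variables (kappa : 'I_N -> P -> R) (gamma : 'I_N -> P -> P) (r0 : R).
Hypothesis kappa_cont : forall i, {within cball r0, continuous (kappa i)}.
Hypothesis gamma_cont : forall i, {within cball r0, continuous (gamma i)}.

Definition xi_pi i (rho : P) : P * P := (xi_ kappa gamma i rho, pi_ gamma i rho).

Lemma xi_pi_continuous i : {within cball r0, continuous (xi_pi i)}.
Proof.
have cid : {within cball r0, continuous (@id P)}.
  by apply: continuous_subspaceT => x; exact: cvg_id.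
move=> rho; have cpi : pi_ gamma i @ rho --> pi_ gamma i rho.
  rewrite /pi_; apply: (@cvgD _ _ _ _ (nbhs_filter rho)); first exact: cid.
  by apply: cvg_big => [|j _]; [exact: add_continuous | exact: gamma_cont].
apply: (@cvg_pair _ _ _ _ (nbhs _) (nbhs _) (nbhs_filter rho)) => //.
rewrite /xi_; apply: (@cvgD _ _ _ _ (nbhs_filter rho)) => //.
by apply: (@cvgZ _ _ _ _ (nbhs_filter rho)); [exact: kappa_cont | exact: gamma_cont].
Qed.

Definition Sset_on (L : set R) (K : set P) i : set P :=
  [set lerp p.1 p.2.1 p.2.2 | p in L `*` (xi_pi i @` K)].

Lemma Sset_onS L L' K K' i :
  L `<=` L' -> K `<=` K' -> Sset_on L K i `<=` Sset_on L' K' i.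
Proof. by move=> LL' KK'; apply: image_subset; apply: setSX => //; exact: image_subset. Qed.

Lemma compact_Sset_on L K i :
  compact L -> compact K -> K `<=` cball r0 -> compact (Sset_on L K i).
Proof.
move=> cL cK Kr0; apply: continuous_compact.
  by apply: continuous_subspaceT; exact: lerp_continuous.
apply: compact_setX => //; apply: continuous_compact => //.
exact: continuous_subspaceW Kr0 (xi_pi_continuous i).
Qed.

Lemma Sset_onE r lam i : Sset kappa gamma r lam i = Sset_on [set lam] (oball r) i.
Proof.
apply/seteqP; split => [_ [rho rr <-] | _ [[l _] [/= -> [rho rr <-]] <-]].
  by exists (lam, xi_pi i rho) => //; split => //; exists rho.
by exists rho.
Qed.

Lemma SigmaE d0 r lam : Sigma kappa gamma d0 r lam =
  \bigcup_i wave_hull (Sset_on `[d0, lam] (oball r) i) (Sset_on [set 0] (oball r) i).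
Proof.
apply/seteqP; split => x.
  move=> [l [ll [i [a [b [Sa [Sb rest]]]]]]]; exists i => //; exists a, b.
  rewrite !Sset_onE in Sa Sb.
  split; last by split.
  by apply: Sset_onS Sa => // _ ->; rewrite /= in_itv.
move=> [i _ [a [b [[[l [a' b']] [/= ll [rho rr Eab]] <-] [Sb rest]]]]].
exists l; split; first by rewrite in_itv in ll.
exists i, (lerp l a' b'), b; rewrite !Sset_onE; split => //.
by exists (l, (a', b')) => //; split => //; exists rho.
Qed.

Lemma closure_Sset k r s lam : 0 <= r -> r < s -> s <= r0 ->
  closure (Sset kappa gamma r lam k) `<=` Sset kappa gamma s lam k.
Proof.
move=> r_ge0 rs sr0; rewrite !Sset_onE.
have Kr0 : cball r `<=` cball r0 by apply: le_cball => //; exact: ltW (lt_le_trans rs sr0).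
apply: (@closed_closure_sub _ _ _ (Sset_on [set lam] (cball r) k)).
- apply: compact_closed; first exact: norm_hausdorff.
  apply: compact_Sset_on Kr0; [exact: compact_set1 | exact: compact_cball].
- exact/Sset_onS/oball_cball.
- exact/Sset_onS/lt_cball_oball.
Qed.

Lemma closure_Sigma d0 r s lam : 0 <= r -> r < s -> s <= r0 ->
  closure (Sigma kappa gamma d0 r lam) `<=` Sigma kappa gamma d0 s lam.
Proof.
move=> r_ge0 rs sr0; rewrite !SigmaE.
have Kr0 : cball r `<=` cball r0 by apply: le_cball => //; exact: ltW (lt_le_trans rs sr0).
apply: (@closed_closure_sub _ _ _ (\bigcup_i wave_hull (Sset_on `[d0, lam] (cball r) i)
                                               (Sset_on [set 0] (cball r) i))).
- apply: closed_bigcup => [|i _]; first exact: finite_finset.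
  by apply: closed_wave_hull; apply: compact_Sset_on Kr0;
    (exact: segment_compact || exact: compact_set1 || exact: compact_cball).
- move=> x [i _ Wx]; exists i => //.
  by apply: wave_hullS Wx; apply: Sset_onS => //; exact: oball_cball.
- move=> x [i _ Wx]; exists i => //.
  by apply: wave_hullS Wx; apply: Sset_onS => //; exact: lt_cball_oball.
Qed.

Lemma le_Sigma d0 r s lam lam' : 0 <= r -> r <= s -> lam <= lam' ->
  Sigma kappa gamma d0 r lam `<=` Sigma kappa gamma d0 s lam'.
Proof.
move=> r_ge0 rs ll'; rewrite !SigmaE => x [i _ Wx]; exists i => //.
apply: wave_hullS Wx; apply: Sset_onS => //; try exact: le_oball.
by move=> l /=; rewrite !in_itv => /andP[-> /le_trans]; apply.
Qed.

Lemma Sigma_shrink {d0 s lam x} : 0 < s -> Sigma kappa gamma d0 s lam x ->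
  exists r, [/\ 0 < r, r < s & Sigma kappa gamma d0 r lam x].
Proof.
rewrite SigmaE => s0 [i _ [a [b [[p [Ip [rho rs Ep]] Ea] [[q [Iq [rho' rs' Eq]] Eb] W]]]]].
have [r1 [r1_gt0 r1s rr1]] := oball_shrink s0 rs.
have [r2 [r2_gt0 r2s rr2]] := oball_shrink s0 rs'.
set r := Num.max r1 r2.
have [r1r r2r] : r1 <= r /\ r2 <= r by rewrite !le_max !lexx orbT.
exists r; split; [by rewrite lt_max r1_gt0 | by rewrite gt_max r1s |].
rewrite SigmaE; exists i => //; exists a, b; split; [|split; [|exact: W]].
  rewrite -Ea; exists p => //; split => //; exists rho => //.
  exact: le_oball (ltW r1_gt0) r1r _ rr1.
rewrite -Eb; exists q => //; split => //; exists rho' => //.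
exact: le_oball (ltW r2_gt0) r2r _ rr2.
Qed.

Lemma compact_sub_Sigma d0 (Delta : set P) : 0 < r0 -> d0 < 1 ->
  (forall r lam, 0 < r -> r <= r0 -> d0 <= lam -> lam < 1 ->
     open (Sigma kappa gamma d0 r lam)) ->
  compact Delta -> Delta `<=` Sigma1 kappa gamma d0 r0 ->
  exists r lam, 0 < r /\ r < r0 /\ d0 <= lam /\ lam < 1 /\
                Delta `<=` Sigma kappa gamma d0 r lam.
Proof.
move=> r0_gt0 d01 oSigma cDelta DeltaS.
pose D := [set p : R * R | (0 < p.1 < r0) && (d0 <= p.2 < 1)].
suff [[r lam] /and3P[/andP[r_gt0 rr0] dl l1] DeltaSr] :
    exists2 p, D p & Delta `<=` Sigma kappa gamma d0 p.1 p.2.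
  by exists r, lam.
apply: (@compact_directed_cover ((P : normedModType R) : ptopologicalType)) => //.
- by move=> [r l] /and3P[/andP[r_gt0 /ltW rr0] dl l1]; exact: oSigma.
- move=> x /DeltaS [l [/andP[dl l1] Sx]].
  have [r [r_gt0 rr0 Srx]] := Sigma_shrink r0_gt0 Sx.
  by exists (r, l) => //; rewrite /D /= r_gt0 rr0 dl l1.
- by exists (r0 / 2, d0); rewrite /D /= lexx d01 andbT; apply/andP; split; lra.
move=> [r1 l1] [r2 l2] /and3P[/andP[r1_gt0 r1r0] d1 l1_lt1].
move=> /and3P[/andP[r2_gt0 r2r0] d2 l2_lt1].
exists (Num.max r1 r2, Num.max l1 l2).
  by rewrite /D /= lt_max r1_gt0 gt_max r1r0 r2r0 le_max d1 gt_max l1_lt1 l2_lt1.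
by move=> x /= [] /le_Sigma; apply; rewrite ?le_max ?lexx ?orbT // ltW.
Qed.

Lemma open_Lset r lam : (forall i, open (Sset kappa gamma r lam i)) ->
  (forall i, open (Sset kappa gamma r 0 i)) ->
  (forall i, open (Lset_i kappa gamma r lam i)) /\ open (Lset kappa gamma r lam).
Proof.
move=> oSl oS0; have oL i : open (Lset_i kappa gamma r lam i) by exact: open_wave_hull.
split=> //; have -> : Lset kappa gamma r lam = \bigcup_i Lset_i kappa gamma r lam i.
  by apply/seteqP; split=> x [i]; exists i.
exact: bigcup_open.
Qed.

End condition_O_sets.

Theorem proposition3p9 (R : realType) (m n N : nat)
    (sigma : 'M[R]_(m, n) -> 'M[R]_(m, n)) (r0 delta1 delta2 delta0 : R)
    (kappa : 'I_N -> ('M[R]_(m, n) * 'M[R]_(m, n))%type -> R)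
    (gamma : 'I_N -> ('M[R]_(m, n) * 'M[R]_(m, n))%type ->
             ('M[R]_(m, n) * 'M[R]_(m, n))%type) :
  condition_O kappa gamma delta0 sigma r0 delta1 delta2 ->
  (* (i) *)
  (forall r lam, delta0 <= lam -> lam < 1 -> 0 < r -> r <= r0 ->
     (forall i, open (Lset_i kappa gamma r lam i)) /\
     open (Lset kappa gamma r lam) /\
     open (Sigma kappa gamma delta0 r lam) /\
     open (Sigma1 kappa gamma delta0 r0)) /\
  (* (ii) *)
  (forall (k : 'I_N) r s lam, 0 < r -> r < s -> s <= r0 -> 0 <= lam -> lam <= 1 ->
     closure (Sset kappa gamma r lam k) `<=` Sset kappa gamma s lam k) /\
  (forall r s lam, 0 < r -> r < s -> s <= r0 -> delta0 <= lam -> lam < 1 ->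
     closure (Sigma kappa gamma delta0 r lam) `<=` Sigma kappa gamma delta0 s lam) /\
  (* (iii) *)
  (forall Delta : set ('M[R]_(m, n) * 'M[R]_(m, n))%type,
     compact Delta -> Delta `<=` Sigma1 kappa gamma delta0 r0 ->
     exists r lam, 0 < r /\ r < r0 /\ delta0 <= lam /\ lam < 1 /\
       Delta `<=` Sigma kappa gamma delta0 r lam).
Proof.
move=> [_ [_ [r0_gt0 [_ [_ [_ [cont [_ [_ [_ [_ [_ [d01 P2]]]]]]]]]]]]].
have kappa_cont i := (cont i).1; have gamma_cont i := (cont i).2.
have oS r lam i : 0 < r -> r <= r0 -> lam = 0 \/ delta0 <= lam < 1 ->
    open (Sset kappa gamma r lam i).
  move=> r_gt0 rr0 lam01; apply: (P2 r lam r_gt0 rr0 _).1.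
  by case: lam01 => [|/andP[]]; [left | right].
have oL r lam : 0 < r -> r <= r0 -> delta0 <= lam -> lam < 1 ->
    (forall i, open (Lset_i kappa gamma r lam i)) /\ open (Lset kappa gamma r lam).
  by move=> r_gt0 rr0 dl l1; apply: open_Lset => i; apply: oS => //; [right; rewrite dl | left].
have oSigma r lam : 0 < r -> r <= r0 -> delta0 <= lam -> lam < 1 ->
    open (Sigma kappa gamma delta0 r lam).
  move=> r_gt0 rr0 dl l1; apply: open_exists => l /andP[dl' ll].
  exact: (oL r l r_gt0 rr0 dl' (le_lt_trans ll l1)).2.
have oSigma1 : open (Sigma1 kappa gamma delta0 r0).
  by apply: open_exists => l /andP[dl l1]; exact: oSigma.
split=> [r lam dl l1 r_gt0 rr0 | ]; first by have [] := oL r lam r_gt0 rr0 dl l1; auto.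
split=> [k r s lam r_gt0 rs sr0 _ _ | ].
  exact: closure_Sset kappa_cont gamma_cont k r s lam (ltW r_gt0) rs sr0.
split=> [r s lam r_gt0 rs sr0 _ _ | Delta cDelta DeltaS].
  exact: closure_Sigma kappa_cont gamma_cont delta0 r s lam (ltW r_gt0) rs sr0.
exact: compact_sub_Sigma r0_gt0 d01 oSigma cDelta DeltaS.
Qed.
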